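(* The function $F$ is Lebesgue integrable on $[0,1]$ and $$\int_0^1F(x)\,dx=z_1+\sum_{n=2}^{\infty}\Big(z_n\prod_{k=1}^{n-1}\sigma_k\Big),$$ where $z_n=\sum_{i=0}^{m_n}\beta_{i,n}q_{i,n}$ and $\sigma_n=\sum_{i=0}^{m_n}p_{i,n}q_{i,n}$.
   Context: Let $(m_n)_{n\ge1}$ be finite nonnegative integers and $\tilde Q=\|q_{i,n}\|$ ($i\in\{0,\dots,m_n\}$) with $q_{i,n}>0$, $\sum_{i}q_{i,n}=1$ for all $n$, and $\prod_n q_{i_n,n}=0$ for every digit sequence $(i_n)$. Put $a_{0,n}=0$, $a_{i,n}=\sum_{l<i}q_{l,n}$; $\Delta^{\tilde Q}_{j_1j_2\dots}=a_{j_1,1}+\sum_{n\ge2}a_{j_n,n}\prod_{l<n}q_{j_l,l}$. The nega-$\tilde Q$-representation $x=\Delta^{-\tilde Q}_{i_1i_2\dots}$ means $x=\Delta^{\tilde Q}_{i_1[m_2-i_2]i_3[m_4-i_4]\dots}$; every $x\in[0,1]$ has one. Let $P=\|p_{i,n}\|$ have the same shape with $p_{i,n}\in(-1,1)$, $\sum_ip_{i,n}=1$, $\prod_n|p_{i_n,n}|=0$ for every digit sequence, $0<\sum_{i<c}p_{i,n}<1$ for $c\in\{1,\dots,m_n\}$. Put $\beta_{0,n}=0$, $\beta_{c,n}=\sum_{i<c}p_{i,n}$; for odd $n$: $\tilde p_{i,n}=p_{i,n}$, $\tilde\beta_{i,n}=\beta_{i,n}$; for even $n$: $\tilde p_{i,n}=p_{m_n-i,n}$,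 $\tilde\beta_{i,n}=\beta_{m_n-i,n}$. $F(x)=\beta_{i_1,1}+\sum_{k\ge2}\tilde\beta_{i_k,k}\prod_{j<k}\tilde p_{i_j,j}$ for $x=\Delta^{-\tilde Q}_{i_1i_2\dots}$ (independent of the representation). *)

(* Indices n of the matrices are 1-based as in the
   paper (n >= 1); the values at n = 0 are irrelevant.  Entries q_{i,n} are
   written [q i n]. *)
From HB Require Import structures.
From mathcomp Require Import all_boot all_order all_algebra.
From mathcomp Require Import all_classical all_reals all_analysis.
From Stdlib Require Import ClassicalEpsilon.
Set Implicit Arguments. Unset Strict Implicit. Unset Printing Implicit Defensive.
Import Order.TTheory GRing.Theory Num.Theory.
Import numFieldNormedType.Exports.
Local Open Scope classical_set_scope.
Local Open Scope ring_scope.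

Section Defs.
Variable R : realType.

Definition digit_seq (m : nat -> nat) (d : nat -> nat) : Prop :=
  forall n, (1 <= n)%N -> (d n <= m n)%N.

Definition valid_Q (m : nat -> nat) (q : nat -> nat -> R) : Prop :=
  [/\ (forall n i, (1 <= n)%N -> (i <= m n)%N -> 0 < q i n),
      (forall n, (1 <= n)%N -> \sum_(i < (m n).+1) q i n = 1) &
      (forall d, digit_seq m d ->
         (fun N => \prod_(1 <= k < N) q (d k) k) @ \oo --> (0 : R))].

Definition valid_P (m : nat -> nat) (p : nat -> nat -> R) : Prop :=
  [/\ (forall n i, (1 <= n)%N -> (i <= m n)%N -> -1 < p i n < 1),
      (forall n, (1 <= n)%N -> \sum_(i < (m n).+1) p i n = 1),
      (forall d, digit_seq m d ->
         (fun N => \prod_(1 <= k < N) `|p (d k) k|) @ \oo --> (0 : R)) &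
      (forall n c, (1 <= n)%N -> (1 <= c <= m n)%N ->
         0 < \sum_(i < c) p i n < 1)].

Definition aQ (q : nat -> nat -> R) (i n : nat) : R := \sum_(l < i) q l n.

Definition DeltaQ (q : nat -> nat -> R) (j : nat -> nat) : R :=
  limn (fun N => \sum_(1 <= n < N)
                   aQ q (j n) n * \prod_(1 <= l < n) q (j l) l).

(* digits of the nega-Q~ representation converted into Q~ digits:
   i_1 [m_2 - i_2] i_3 [m_4 - i_4] ... *)
Definition nega_to_Q (m : nat -> nat) (i : nat -> nat) : nat -> nat :=
  fun n => if odd n then i n else (m n - i n)%N.

Definition is_nega_repr (m : nat -> nat) (q : nat -> nat -> R) (x : R)
    (i : nat -> nat) : Prop :=
  digit_seq m i /\ x = DeltaQ q (nega_to_Q m i).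

(* a chosen nega-Q~ representation of x (arbitrary if none exists) *)
Definition nega_digits (m : nat -> nat) (q : nat -> nat -> R) (x : R) :
    nat -> nat :=
  epsilon (inhabits (fun _ => 0%N)) (is_nega_repr m q x).

Definition betaP (p : nat -> nat -> R) (c n : nat) : R := \sum_(i < c) p i n.

Definition ptilde (m : nat -> nat) (p : nat -> nat -> R) (i n : nat) : R :=
  if odd n then p i n else p (m n - i)%N n.

Definition betatilde (m : nat -> nat) (p : nat -> nat -> R) (i n : nat) : R :=
  if odd n then betaP p i n else betaP p (m n - i)%N n.

(* F(x) = beta_{i_1,1} + sum_{k>=2} betatilde_{i_k,k} prod_{j<k} ptilde_{i_j,j}
   (beta_{.,1} = betatilde_{.,1} since 1 is odd) *)
Definition F_of_digits (m : nat -> nat) (p : nat -> nat -> R) (i : nat -> nat) : R :=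
  limn (fun N => \sum_(1 <= k < N)
                   betatilde m p (i k) k * \prod_(1 <= j < k) ptilde m p (i j) j).

Definition F (m : nat -> nat) (q p : nat -> nat -> R) (x : R) : R :=
  F_of_digits m p (nega_digits m q x).

Definition zQ (m : nat -> nat) (q p : nat -> nat -> R) (n : nat) : R :=
  \sum_(i < (m n).+1) betaP p i n * q i n.

Definition sigmaQ (m : nat -> nat) (q p : nat -> nat -> R) (n : nat) : R :=
  \sum_(i < (m n).+1) p i n * q i n.

End Defs.

(* For x in [0, 1] let d_1 d_2 ... be its Q~-digits, i.e. its nega-Q~-digits
   with every even digit i_n replaced by m_n - i_n, so that
   x = Delta^Q~_{d_1 d_2 ...}.  The same reflection turns F into
   F(x) = sum_k beta_{d_k,k} prod_{l<k} p_{d_l,l}, a series whose partial sums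
   all lie in [0, 1].  The points whose first n
   digits are prescribed form, up to its endpoints, an interval of length
   prod_{l<=n} q_{d_l,l}; hence under Lebesgue measure the digits are independent
   with P(d_n = i) = q_{i,n}, and the k-th term of the series integrates to
   z_k prod_{l<k} sigma_l.  Bounded convergence then gives the theorem. *)

From Stdlib Require Import ClassicalEpsilon.
From HB Require Import structures.
From mathcomp Require Import all_boot all_order all_algebra.
From mathcomp Require Import all_classical all_reals all_analysis.
From mathcomp Require Import measurable_realfun ring lra.
Import Order.TTheory GRing.Theory Num.Theory.
Import numFieldNormedType.Exports.
Local Open Scope classical_set_scope.
Local Open Scope ring_scope.

Set Implicit Arguments. Unset Strict Implicit. Unset Printing Implicit Defensive.

Lemma integrable_indic_finite d (T : measurableType d) (R : realType)
    (mu : {measure set T -> \bar R}) (D A : set T) :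
  measurable D -> (mu D < +oo)%E -> measurable A ->
  mu.-integrable D (fun x => (\1_A x)%:E).
Proof.
move=> mD muD mA; apply/integrableP; split.
  exact/measurable_EFinP/measurable_indic.
under eq_integral => x _ do rewrite gee0_abs ?lee_fin //.
rewrite integral_indic //; apply: le_lt_trans muD.
by apply: le_measure; rewrite ?inE //; apply: measurableI.
Qed.

Lemma lebesgue_measure01_lty (R : realType) :
  (lebesgue_measure (`[0%R, 1%R] : set R) < +oo)%E.
Proof. by rewrite lebesgue_measure_itv /= lte_fin ltr01 -EFinD subr0 ltry. Qed.

Section BoundedConvergence.
Context d (T : measurableType d) (R : realType).
Variables (mu : {measure set T -> \bar R}) (D : set T).
Hypotheses (mD : measurable D) (muD : (mu D < +oo)%E).
Variables (f_ : (T -> R)^nat) (f : T -> R) (s : R^nat) (M : R).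
Hypothesis int_f_ : forall n, mu.-integrable D (EFin \o f_ n).
Hypothesis f_f : forall x, D x -> f_ ^~ x @ \oo --> f x.
Hypothesis f_M : forall n x, D x -> `|f_ n x| <= M.
Hypothesis int_f_E : forall n, (\int[mu]_(x in D) (f_ n x)%:E = (s n)%:E)%E.

Lemma bounded_convergence :
  [/\ mu.-integrable D (EFin \o f), cvgn s &
      (\int[mu]_(x in D) (f x)%:E = (limn s)%:E)%E].
Proof.
have mf_ n : measurable_fun D (EFin \o f_ n) by apply: measurable_int (int_f_ n).
have mf : measurable_fun D f.
  by apply: measurable_fun_cvg f_f => n; apply/measurable_EFinP.
have int_M : mu.-integrable D (EFin \o cst M).
  by apply: measurable_bounded_integrable => //; apply: bounded_cst.
have cvg_fE x : D x -> (fun n => (f_ n x)%:E) @ \oo --> (f x)%:E.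
  by move=> Dx; apply/fine_cvgP; split; [apply: nearW | apply: f_f].
have [int_f _ cvg_int] := @dominated_convergence _ _ _ mu _ mD
  (fun n => EFin \o f_ n) (EFin \o f) (EFin \o cst M) mf_
  (proj2 (measurable_EFinP _ _) mf) (aeW _ cvg_fE) int_M (aeW _ (fun x n Dx => f_M n Dx)).
have fin_int := integrable_fin_num mD int_f.
move: cvg_int; rewrite (eq_fun int_f_E) -(fineK fin_int) => /fine_cvgP[_ cvg_s].
split => //; first by apply/cvg_ex; eexists; apply: cvg_s.
by rewrite (cvg_lim _ cvg_s) ?fineK.
Qed.

End BoundedConvergence.

Section DigitSeries.
Variables (R : realType) (m : nat -> nat) (r : nat -> nat -> R).

Definition digit_psum (j : nat -> nat) (n N : nat) : R :=
  \sum_(n <= k < N) betaP r (j k) k * \prod_(n <= l < k) r (j l) l.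

Lemma betaPS c n : betaP r c.+1 n = betaP r c n + r c n.
Proof. by rewrite /betaP big_ord_recr. Qed.

Lemma digit_psum_geq j n N : (N <= n)%N -> digit_psum j n N = 0.
Proof. by move=> Nn; rewrite /digit_psum big_geq. Qed.

Lemma digit_psum_recl j n N : (n < N)%N ->
  digit_psum j n N = betaP r (j n) n + r (j n) n * digit_psum j n.+1 N.
Proof.
move=> nN; rewrite /digit_psum big_ltn // big_geq // mulr1; congr (_ + _).
rewrite mulr_sumr; apply: eq_big_nat => k /andP[nk _].
by rewrite (@big_ltn _ _ _ n k) ?(ltn_trans (ltnSn n) nk) // mulrCA.
Qed.

Lemma digit_psum_cat j n k N : (n <= k <= N)%N ->
  digit_psum j n N =
  digit_psum j n k + (\prod_(n <= l < k) r (j l) l) * digit_psum j k N.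
Proof.
move=> /andP[nk kN]; rewrite /digit_psum (big_cat_nat nk kN) /=; congr (_ + _).
rewrite mulr_sumr; apply: eq_big_nat => i /andP[ki _].
by rewrite (big_cat_nat nk ki) /= mulrCA.
Qed.

Lemma eq_digit_psum j j' n N : {in [pred l | (n <= l < N)%N], j =1 j'} ->
  digit_psum j n N = digit_psum j' n N.
Proof.
move=> jj'; apply: eq_big_nat => k /andP[nk kN]; rewrite jj' ?inE ?nk //.
congr (_ * _); apply: eq_big_nat => l /andP[nl lk].
by rewrite jj' // inE nl (ltn_trans lk kN).
Qed.

Hypothesis betaP01 : forall n c, (1 <= n)%N -> (c <= (m n).+1)%N ->
  0 <= betaP r c n <= 1.

(* [digit_psum j n N] lies between [betaP r (j n) n] and
   [betaP r (j n).+1 n = betaP r (j n) n + r (j n) n], whatever the sign of [r]. *)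
Lemma digit_psum_01 j n N : digit_seq m j -> (1 <= n)%N ->
  0 <= digit_psum j n N <= 1.
Proof.
move=> dj n1; have [Nn|nN] := leqP N n; first by rewrite digit_psum_geq // lexx ler01.
rewrite -(subnKC (ltnW nN)); move: (N - n)%N => d; clear nN.
elim: d n n1 => [|d IH] k k1.
  by rewrite addn0 digit_psum_geq // lexx ler01.
rewrite digit_psum_recl; last by rewrite addnS ltnS leq_addr.
rewrite -addSnnS.
have /andP[s0 s1] := IH k.+1 isT.
have /andP[b0 b1] := betaP01 k1 (leqW (dj k k1)).
have /andP[c0 c1] := betaP01 k1 (dj k k1 : ((j k).+1 <= (m k).+1)%N).
by rewrite betaPS in c0 c1; apply/andP; split; nra.
Qed.

Lemma cvg_digit_psum j : digit_seq m j ->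
  (fun N => \prod_(1 <= k < N) `|r (j k) k|) @ \oo --> (0 : R) ->
  cvgn (digit_psum j 1).
Proof.
move=> dj prod0; apply: cauchy_cvg; apply/cauchy_exP => e e0.
rewrite /fmapE -ball_normE /ball_.
have [N0 _ prod_lt] := cvgr0_norm_lt _ prod0 _ e0.
pose N := maxn N0 1; exists (digit_psum j 1 N), N => // M /= NM.
have N1 : (1 <= N)%N by rewrite leq_maxr.
rewrite (@digit_psum_cat j 1 N M) ?N1 // opprD addrA subrr add0r normrN normrM.
have := prod_lt N (leq_maxl _ _); rewrite /= ger0_norm ?prodr_ge0 // => lt_e.
apply: le_lt_trans lt_e; rewrite normr_prod -[leRHS]mulr1 ler_wpM2l ?prodr_ge0 //.
by have /andP[s0 s1] := digit_psum_01 M dj N1; rewrite ger0_norm.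
Qed.

End DigitSeries.

Section QCylinders.
Variables (R : realType) (m : nat -> nat) (q : nat -> nat -> R).
Hypothesis hQ : valid_Q m q.

Lemma q_gt0 n i : (1 <= n)%N -> (i <= m n)%N -> 0 < q i n.
Proof. by case: hQ => q0 _ _; apply: q0. Qed.

Lemma le_betaP_Q n c c' : (1 <= n)%N -> (c <= c' <= (m n).+1)%N ->
  betaP q c n <= betaP q c' n.
Proof.
move=> n1 /andP[cc' c'm]; rewrite /betaP -!(big_mkord xpredT (fun i => q i n)).
rewrite (big_cat_nat (n:=c) (leq0n c) cc') /= lerDl big_nat_cond.
apply: sumr_ge0 => i /andP[/andP[_ ic'] _]; apply/ltW/q_gt0 => //.
by rewrite -ltnS (leq_trans ic').
Qed.

Lemma betaP_Q_top n : (1 <= n)%N -> betaP q (m n).+1 n = 1.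
Proof. by case: hQ => _ q1 _; apply: q1. Qed.

Lemma betaP_Q01 n c : (1 <= n)%N -> (c <= (m n).+1)%N -> 0 <= betaP q c n <= 1.
Proof.
move=> n1 cm; apply/andP; split.
  have -> : 0 = betaP q 0 n by rewrite /betaP big_ord0.
  by rewrite le_betaP_Q.
by rewrite -(betaP_Q_top n1) le_betaP_Q // cm leqnn.
Qed.

(* Up to its endpoints, the interval [cyl_left n j, cyl_left n j + cyl_len n j]
   is the set of points whose first [n] digits are those of [j] ([cyl_itvE]). *)
Definition cyl_left n j := digit_psum q j 1 n.+1.
Definition cyl_len n j := \prod_(1 <= l < n.+1) q (j l) l.

Lemma cyl_leftS n j :
  cyl_left n.+1 j = cyl_left n j + cyl_len n j * betaP q (j n.+1) n.+1.
Proof.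
rewrite /cyl_left (@digit_psum_cat _ q j 1 n.+1 n.+2) ?leqnSn //.
rewrite (@digit_psum_recl _ q j n.+1 n.+2) //.
by rewrite (@digit_psum_geq _ q j n.+2) // mulr0 addr0.
Qed.

Lemma cyl_lenS n j : cyl_len n.+1 j = cyl_len n j * q (j n.+1) n.+1.
Proof. by rewrite /cyl_len big_nat_recr. Qed.

Lemma cyl_len_gt0 n j : digit_seq m j -> 0 < cyl_len n j.
Proof.
move=> dj; rewrite /cyl_len big_nat_cond.
by apply: prodr_gt0 => l /andP[/andP[l1 _] _]; apply/q_gt0/dj.
Qed.

Lemma cyl_left_ge0 n j : digit_seq m j -> 0 <= cyl_left n j.
Proof. by move=> dj; have /andP[] := digit_psum_01 betaP_Q01 n.+1 dj (leqnn 1). Qed.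

Lemma cyl_nested n j : digit_seq m j ->
  cyl_left n j <= cyl_left n.+1 j /\
  cyl_left n.+1 j + cyl_len n.+1 j <= cyl_left n j + cyl_len n j.
Proof.
move=> dj; rewrite cyl_leftS cyl_lenS.
have l0 := ltW (cyl_len_gt0 n dj); have jn := dj n.+1 isT.
have /andP[b0 b1] := betaP_Q01 (isT : (1 <= n.+1)%N) (leqW jn).
have /andP[c0 c1] :=
  betaP_Q01 (isT : (1 <= n.+1)%N) (jn : ((j n.+1).+1 <= (m n.+1).+1)%N).
by rewrite betaPS in c0 c1; split; nra.
Qed.

Lemma cyl_right_le1 n j : digit_seq m j -> cyl_left n j + cyl_len n j <= 1.
Proof.
move=> dj; elim: n => [|n IH].
  by rewrite /cyl_left /cyl_len digit_psum_geq // big_geq // add0r.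
by apply: le_trans IH; case: (cyl_nested n dj).
Qed.

Lemma eq_cyl n j j' : {in [pred l | (1 <= l <= n)%N], j =1 j'} ->
  cyl_left n j = cyl_left n j' /\ cyl_len n j = cyl_len n j'.
Proof.
move=> jj'; split; first by apply: eq_digit_psum => l; rewrite !inE ltnS; apply: jj'.
by apply: eq_big_nat => l; rewrite ltnS => l1n; rewrite jj'.
Qed.

Lemma cyl_lex_step n j j' : digit_seq m j' ->
  {in [pred l | (1 <= l <= n)%N], j =1 j'} -> (j n.+1 < j' n.+1)%N ->
  cyl_left n.+1 j + cyl_len n.+1 j <= cyl_left n.+1 j'.
Proof.
move=> dj' jj' lt_j; rewrite !cyl_leftS cyl_lenS; have [-> ->] := eq_cyl jj'.
rewrite -addrA -mulrDr lerD2l ler_wpM2l //.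
  exact/ltW/cyl_len_gt0.
by rewrite -betaPS le_betaP_Q // lt_j leqW // dj'.
Qed.

Lemma cyl_lex n j j' : digit_seq m j -> digit_seq m j' ->
  [\/ {in [pred l | (1 <= l <= n)%N], j =1 j'},
      cyl_left n j + cyl_len n j <= cyl_left n j' |
      cyl_left n j' + cyl_len n j' <= cyl_left n j].
Proof.
move=> dj dj'; elim: n => [|n [jj'|lt|gt]].
- by apply: Or31 => l; rewrite inE => /andP[/leq_trans h /h].
- case: (ltngtP (j n.+1) (j' n.+1)) => [lt|gt|eq].
  + by apply: Or32; apply: cyl_lex_step.
  + by apply: Or33; apply: cyl_lex_step => // l /jj'.
  apply: Or31 => l; rewrite inE => /andP[l1]; rewrite leq_eqVlt => /orP[/eqP-> //|].
  by rewrite ltnS => ln; apply: jj'; rewrite inE l1.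
- apply: Or32; have [_ h1] := cyl_nested n dj; have [h2 _] := cyl_nested n dj'.
  exact: le_trans h1 (le_trans lt h2).
- apply: Or33; have [_ h1] := cyl_nested n dj'; have [h2 _] := cyl_nested n dj.
  exact: le_trans h1 (le_trans gt h2).
Qed.

Lemma cvg_DeltaQ j : digit_seq m j -> cvgn (digit_psum q j 1).
Proof.
move=> dj; apply: (cvg_digit_psum betaP_Q01) => //.
case: hQ => _ _ /(_ j dj); apply: cvg_trans; apply: near_eq_cvg.
apply: nearW => N; apply: eq_big_nat => k /andP[k1 _].
by rewrite ger0_norm //; apply/ltW/q_gt0/dj.
Qed.

Lemma DeltaQ_cyl n j : digit_seq m j ->
  cyl_left n j <= DeltaQ q j <= cyl_left n j + cyl_len n j.
Proof.
move=> dj; have in_cyl : \forall N \near \oo,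
    cyl_left n j <= digit_psum q j 1 N <= cyl_left n j + cyl_len n j.
  exists n.+1 => // N /= nN; rewrite (@digit_psum_cat _ q j 1 n.+1 N) ?nN //.
  have /andP[s0 s1] := digit_psum_01 betaP_Q01 N dj (isT : (1 <= n.+1)%N).
  have l0 := ltW (cyl_len_gt0 n dj); rewrite /cyl_len in l0.
  by apply/andP; split; rewrite /cyl_left /cyl_len; nra.
apply/andP; split.
  by apply: limr_ge (cvg_DeltaQ dj) _; apply: filterS in_cyl => N /andP[].
by apply: limr_le (cvg_DeltaQ dj) _; apply: filterS in_cyl => N /andP[].
Qed.

End QCylinders.

Section QRepresentation.
Variables (R : realType) (m : nat -> nat) (q : nat -> nat -> R).
Hypothesis hQ : valid_Q m q.

Definition greedy_digit n (y : R) : nat :=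
  \max_(i < (m n).+1 | betaP q i n <= y) (i : nat).

Lemma greedy_digit_le n y : (greedy_digit n y <= m n)%N.
Proof. by apply/bigop.bigmax_leqP => i _; rewrite -ltnS. Qed.

Lemma betaP_greedy_le n y : 0 <= y -> betaP q (greedy_digit n y) n <= y.
Proof.
move=> y0; have beta0 : betaP q (@ord0 (m n)) n <= y by rewrite /betaP big_ord0.
rewrite /greedy_digit (bigop.bigmax_eq_arg ord0 beta0).
by case: fintype.arg_maxnP.
Qed.

Lemma greedy_betaP_ge n y : (1 <= n)%N -> y <= 1 ->
  y <= betaP q (greedy_digit n y).+1 n.
Proof.
move=> n1 y1; set c := greedy_digit n y.
have [mc|cm] := leqP (m n) c.
  have -> : c = m n by apply/eqP; rewrite eqn_leq mc greedy_digit_le.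
  by rewrite betaP_Q_top.
rewrite leNgt; apply/negP => /ltW beta_le.
have := @leq_bigmax_cond _ (fun i : 'I_(m n).+1 => betaP q i n <= y)
  (fun i => (i : nat)) (Ordinal (cm : (c.+1 < (m n).+1)%N)) beta_le.
by rewrite -/(greedy_digit n y) -/c ltnn.
Qed.

Section Greedy.
Variable x : R.
Hypothesis x01 : 0 <= x <= 1.

(* [greedy_rem k] is the position of [x] inside its rank-[k] cylinder,
   rescaled to [0, 1]. *)
Fixpoint greedy_rem (k : nat) : R :=
  if k is k'.+1 then
    let y := greedy_rem k' in let c := greedy_digit k y in (y - betaP q c k) / q c k
  else x.

Definition greedy_digits (l : nat) : nat :=
  if l is l'.+1 then greedy_digit l (greedy_rem l') else 0.

Lemma greedy_digitsP : digit_seq m greedy_digits.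
Proof. by case=> // n _; apply: greedy_digit_le. Qed.

Lemma greedy_rem01 k : 0 <= greedy_rem k <= 1.
Proof.
elim: k => [//|k /andP[r0 r1]] /=; set c := greedy_digit k.+1 (greedy_rem k).
have qc : 0 < q c k.+1 by exact: (q_gt0 hQ _ (greedy_digit_le _ _)).
have lo := betaP_greedy_le k.+1 r0.
have hi := greedy_betaP_ge (isT : (1 <= k.+1)%N) r1.
rewrite -/c betaPS in lo hi.
by rewrite divr_ge0 ?subr_ge0 ?(ltW qc) //= ler_pdivrMr // mul1r lerBlDl.
Qed.

Lemma greedy_remE k :
  x = cyl_left q k greedy_digits + cyl_len q k greedy_digits * greedy_rem k.
Proof.
elim: k => [|k IH].
  by rewrite /cyl_left /cyl_len digit_psum_geq // big_geq // add0r mul1r.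
rewrite cyl_leftS cyl_lenS {1}IH /=; set c := greedy_digit k.+1 (greedy_rem k).
have qc : q c k.+1 != 0 by rewrite gt_eqF // (q_gt0 hQ _ (greedy_digit_le _ _)).
rewrite -mulrA [q c k.+1 * _]mulrCA mulfV // mulr1 -addrA -mulrDr.
by congr (_ + _ * _); rewrite /greedy_digits -/c; ring.
Qed.

Lemma cvg_greedy_digits : digit_psum q greedy_digits 1 @ \oo --> x.
Proof.
case: hQ => _ _ /(_ greedy_digits greedy_digitsP) prod0.
apply/cvgrPdist_lt => e e0; have [N0 _ prod_lt] := cvgr0_norm_lt _ prod0 _ e0.
exists N0.+1 => // -[//|N] /= N0N.
rewrite {1}(greedy_remE N) /cyl_left addrC addKr normrM.
apply: le_lt_trans (prod_lt N.+1 (ltnW N0N)).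
have /andP[r0 r1] := greedy_rem01 N.
by rewrite -[leRHS]mulr1 ler_wpM2l // ger0_norm.
Qed.

End Greedy.

Lemma DeltaQ_onto x : 0 <= x <= 1 -> exists2 j, digit_seq m j & x = DeltaQ q j.
Proof.
move=> x01; exists (greedy_digits x); first exact: greedy_digitsP.
exact/esym/cvg_lim/cvg_greedy_digits.
Qed.

Lemma eq_DeltaQ j j' :
  {in [pred n | (1 <= n)%N], j =1 j'} -> DeltaQ q j = DeltaQ q j'.
Proof.
move=> jj'; rewrite /DeltaQ; congr (limn _); apply/funext => N.
by apply: (@eq_digit_psum _ q) => n /andP[n1 _]; apply: jj'.
Qed.

Definition Qdigits (x : R) : nat -> nat := nega_to_Q m (nega_digits m q x).

Lemma nega_digitsP x : 0 <= x <= 1 -> is_nega_repr m q x (nega_digits m q x).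
Proof.
move=> /DeltaQ_onto[j dj ->]; apply: epsilon_spec.
exists (nega_to_Q m j); split.
  by move=> n n1; rewrite /nega_to_Q; case: odd; [apply: dj | apply: leq_subr].
apply: eq_DeltaQ => n n1; rewrite /nega_to_Q.
by case: odd => //; rewrite subKn // dj.
Qed.

Lemma QdigitsP x : 0 <= x <= 1 -> digit_seq m (Qdigits x).
Proof.
move=> /nega_digitsP[di _] n n1; rewrite /Qdigits /nega_to_Q.
by case: odd; [apply: di | apply: leq_subr].
Qed.

Lemma QdigitsE x : 0 <= x <= 1 -> x = DeltaQ q (Qdigits x).
Proof. by case/nega_digitsP. Qed.

Definition cyl n (f : nat -> nat) : set R :=
  [set x | 0 <= x <= 1 /\ {in [pred l | (1 <= l <= n)%N], Qdigits x =1 f}].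

Lemma cyl_sub_itv n f x : cyl n f x ->
  cyl_left q n f <= x <= cyl_left q n f + cyl_len q n f.
Proof.
move=> [x01 xf]; have [<- <-] := eq_cyl q xf.
have := DeltaQ_cyl hQ n (QdigitsP x01).
by rewrite -QdigitsE.
Qed.

Lemma itv_sub_cyl n f x : digit_seq m f ->
  cyl_left q n f < x < cyl_left q n f + cyl_len q n f -> cyl n f x.
Proof.
move=> df /andP[lo_x x_hi].
have x01 : 0 <= x <= 1.
  rewrite (le_trans (cyl_left_ge0 hQ n df) (ltW lo_x)) /=.
  exact: le_trans (ltW x_hi) (cyl_right_le1 hQ n df).
have /andP[lo hi] := @cyl_sub_itv n (Qdigits x) x (conj x01 (fun _ _ => erefl)).
case: (cyl_lex hQ n (QdigitsP x01) df) => [xf|le_x|le_f].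
- by split.
- by move: (le_trans hi le_x); rewrite leNgt lo_x.
- by move: (le_trans le_f lo); rewrite leNgt x_hi.
Qed.

End QRepresentation.

Section CylinderMeasure.
Variables (R : realType) (m : nat -> nat) (q : nat -> nat -> R).
Hypothesis hQ : valid_Q m q.
Variables (n : nat) (f : nat -> nat).
Hypothesis df : digit_seq m f.
Let a := cyl_left q n f.
Let b := cyl_left q n f + cyl_len q n f.

Lemma cyl_itvE :
  cyl m q n f = `]a, b[ `|` (cyl m q n f `&` [set a]) `|` (cyl m q n f `&` [set b]).
Proof.
apply/seteqP; split => x; last first.
  by move=> [[|[]//]|[]//]; rewrite /= in_itv /=; apply: itv_sub_cyl.
move=> cx; have /andP[ax xb] := cyl_sub_itv hQ cx; move: cx.
have [->|xa] := eqVneq x a; first by left; right.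
have [->|xb'] := eqVneq x b; first by right.
by move=> _; left; left; rewrite /= in_itv /= !lt_neqAle eq_sym xa xb' ax xb.
Qed.

Lemma measurable_cyl : measurable (cyl m q n f).
Proof.
have mI1 c : measurable (cyl m q n f `&` [set c]).
  by rewrite setI1; case: ifP => _; [apply: measurable_set1 | apply: measurable0].
by rewrite cyl_itvE; apply: measurableU => //; apply: measurableU.
Qed.

Lemma lebesgue_measure_cyl : lebesgue_measure (cyl m q n f) = (cyl_len q n f)%:E.
Proof.
have ab : a < b by rewrite ltrDl (cyl_len_gt0 hQ n df).
have itv_len b0 b1 :
    lebesgue_measure [set` Interval (BSide b0 a) (BSide b1 b)] = (cyl_len q n f)%:E.
  by rewrite lebesgue_measure_itv /= lte_fin ab -EFinD /b addrAC subrr add0r.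
have mcyl := measurable_cyl.
apply/eqP; rewrite eq_le; apply/andP; split.
  rewrite -(itv_len true false) le_measure ?inE // => x cx.
  by have := cyl_sub_itv hQ cx; rewrite /= in_itv.
by rewrite -(itv_len false true) le_measure ?inE // cyl_itvE => x ?; left; left.
Qed.

End CylinderMeasure.

Section PrefixIntegral.
Variables (R : realType) (m : nat -> nat) (q : nat -> nat -> R).
Hypothesis hQ : valid_Q m q.
Variable n : nat.

(* The first [n] digits of a point, coded as a finite function so that
   functions of them can be summed over. *)
Definition max_digit := \max_(l < n.+1) m l.
Local Notation prefix := {ffun 'I_n -> 'I_max_digit.+1}.

Definition admissible_digit (i : 'I_n) : pred 'I_max_digit.+1 :=
  fun c => (c < (m i.+1).+1)%N.

Definition seq_of_prefix (phi : prefix) : nat -> nat := fun l =>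
  if l is l'.+1 then
    if (insub l' : option 'I_n) is Some i then nat_of_ord (phi i) else 0%N
  else 0%N.

Definition prefix_of (x : R) : prefix :=
  [ffun i : 'I_n => inord (Qdigits m q x i.+1)].

Lemma seq_of_prefixE phi (i : 'I_n) : seq_of_prefix phi i.+1 = phi i.
Proof.
rewrite /seq_of_prefix insubT //= => lt_in.
by congr (nat_of_ord (phi _)); apply: val_inj.
Qed.

Lemma seq_of_prefixP phi :
  phi \in family admissible_digit -> digit_seq m (seq_of_prefix phi).
Proof.
move=> /familyP adm [//|l] _; have [ln|nl] := ltnP l n.
  by rewrite (seq_of_prefixE phi (Ordinal ln)) -ltnS; apply: (adm (Ordinal ln)).
by rewrite /seq_of_prefix insubF // ltnNge nl.
Qed.

Lemma m_le_max_digit l : (l <= n)%N -> (m l <= max_digit)%N.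
Proof. by move=> ln; apply: (@leq_bigmax _ (m \o val) (Ordinal (ln : (l < n.+1)%N))). Qed.

Lemma prefix_ofE x (i : 'I_n) :
  0 <= x <= 1 -> nat_of_ord (prefix_of x i) = Qdigits m q x i.+1.
Proof.
move=> x01; rewrite ffunE inordK // ltnS.
exact: leq_trans (QdigitsP hQ x01 (isT : (1 <= i.+1)%N)) (m_le_max_digit (ltn_ord i)).
Qed.

Lemma prefix_of_admissible x :
  0 <= x <= 1 -> prefix_of x \in family admissible_digit.
Proof.
move=> x01; apply/familyP => i; rewrite unfold_in /admissible_digit prefix_ofE // ltnS.
exact: QdigitsP.
Qed.

Lemma cyl_prefix x phi :
  0 <= x <= 1 -> cyl m q n (seq_of_prefix phi) x <-> phi = prefix_of x.
Proof.
move=> x01; split.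
  move=> [_ xphi]; apply/ffunP => i; apply/val_inj => /=.
  by rewrite prefix_ofE // -seq_of_prefixE xphi // inE ltn_ord.
move=> ->; split => // -[//|l]; rewrite inE => /andP[_ ln].
by rewrite (seq_of_prefixE _ (Ordinal (ln : (l < n)%N))) prefix_ofE.
Qed.

Lemma measurable_cyl_prefix phi : measurable (cyl m q n (seq_of_prefix phi)).
Proof.
have [adm|not_adm] := boolP (phi \in family admissible_digit).
  by have := measurable_cyl hQ n (seq_of_prefixP adm).
suff -> : cyl m q n (seq_of_prefix phi) = set0 by [].
apply/seteqP; split => // x cx; have x01 := cx.1.
by move: not_adm; rewrite ((cyl_prefix phi x01).1 cx) prefix_of_admissible.
Qed.

Lemma cyl_len_prefix phi :
  cyl_len q n (seq_of_prefix phi) = \prod_(i < n) q (phi i) i.+1.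
Proof.
rewrite /cyl_len big_add1 -[n.+1.-1]/n big_mkord.
by apply: eq_bigr => i _; rewrite seq_of_prefixE.
Qed.

Lemma prefix_ofD (G : prefix -> R) x : 0 <= x <= 1 ->
  G (prefix_of x) =
  \sum_(phi in family admissible_digit) \1_(cyl m q n (seq_of_prefix phi)) x * G phi.
Proof.
move=> x01; rewrite (bigD1 (prefix_of x)) ?prefix_of_admissible //= big1 ?addr0.
  by rewrite indicE mem_set ?mul1r //; apply/cyl_prefix.
move=> phi /andP[_ phi_x]; rewrite indicE memNset ?mul0r //.
by move=> /(cyl_prefix phi x01) phi_xE; rewrite phi_xE eqxx in phi_x.
Qed.

Lemma integral_prefix (G : prefix -> R) :
  lebesgue_measure.-integrable `[0, 1] (fun x => (G (prefix_of x))%:E) /\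
  (\int[lebesgue_measure]_(x in `[0%R, 1%R]) (G (prefix_of x))%:E =
    (\sum_(phi in family admissible_digit) G phi * \prod_(i < n) q (phi i) i.+1)%:E)%E.
Proof.
pose k phi x := ((G phi)%:E * (\1_(cyl m q n (seq_of_prefix phi)) x)%:E)%E.
have int_indic phi : lebesgue_measure.-integrable `[0, 1]
    (fun x => (\1_(cyl m q n (seq_of_prefix phi)) x)%:E).
  apply: integrable_indic_finite => //; first exact: lebesgue_measure01_lty.
  exact: measurable_cyl_prefix.
have int_k phi : lebesgue_measure.-integrable `[0, 1] (k phi).
  exact: integrableZl.
have GE : {in [set` `[0%R, 1%R]],
    (fun x => \sum_(phi in family admissible_digit) k phi x)%E =1
    (fun x => (G (prefix_of x))%:E)}.
  move=> x; rewrite inE /= in_itv /= => x01.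
  rewrite (prefix_ofD _ x01) sumEFin; congr EFin.
  by apply: eq_bigr => phi _; rewrite mulrC.
split.
  by apply: (@eq_integrable _ _ _ lebesgue_measure _ _ _ _ GE) => //; apply: integrable_sum.
rewrite -(@eq_integral _ _ _ lebesgue_measure _ _ _ GE) integral_sum // -sumEFin.
apply: eq_bigr => phi adm.
have mcyl := measurable_cyl_prefix phi.
have cyl01 : cyl m q n (seq_of_prefix phi) `<=` `[0%R, 1%R].
  by move=> x [x01 _]; rewrite /= in_itv.
rewrite integralZl // integral_indic // setIidl // EFinM -cyl_len_prefix.
by congr (_ * _)%E; apply: lebesgue_measure_cyl (seq_of_prefixP adm).
Qed.

Lemma integral_prod_digits (g : nat -> nat -> R) :
  lebesgue_measure.-integrable `[0, 1]
     (fun x => (\prod_(i < n) g i (Qdigits m q x i.+1))%:E) /\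
  (\int[lebesgue_measure]_(x in `[0%R, 1%R])
     (\prod_(i < n) g i (Qdigits m q x i.+1))%:E =
    (\prod_(i < n) \sum_(c < (m i.+1).+1) g i c * q c i.+1)%:E)%E.
Proof.
have [int_G int_GE] := integral_prefix (fun phi => \prod_(i < n) g i (phi i)).
have GE : {in [set` `[0%R, 1%R]],
    (fun x => (\prod_(i < n) g i (prefix_of x i))%:E) =1
    (fun x => (\prod_(i < n) g i (Qdigits m q x i.+1))%:E)}.
  move=> x; rewrite inE /= in_itv /= => x01; congr EFin.
  by apply: eq_bigr => i _; rewrite prefix_ofE.
split; first exact: (@eq_integrable _ _ _ lebesgue_measure _ _ _ _ GE).
rewrite -(@eq_integral _ _ _ lebesgue_measure _ _ _ GE) int_GE; congr EFin.
under eq_bigr do rewrite -big_split /=.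
rewrite -(bigA_distr_big_dep admissible_digit
  (fun (i : 'I_n) (c : 'I_max_digit.+1) => g i c * q c i.+1)).
apply: eq_bigr => i _.
rewrite (big_ord_widen max_digit.+1 (fun c => g i c * q c i.+1)) //.
by rewrite ltnS m_le_max_digit.
Qed.

End PrefixIntegral.

Section FPartialSums.
Variables (R : realType) (m : nat -> nat) (q p : nat -> nat -> R).
Hypotheses (hQ : valid_Q m q) (hP : valid_P m p).
Local Notation Qdigits := (Qdigits m q).

Lemma betaP_P01 n c : (1 <= n)%N -> (c <= (m n).+1)%N -> 0 <= betaP p c n <= 1.
Proof.
case: hP => _ p1 _ beta01 n1; rewrite leq_eqVlt => /orP[/eqP->|].
  by rewrite /betaP p1 // ler01 lexx.
case: c => [_|c]; first by rewrite /betaP big_ord0 lexx ler01.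
by rewrite ltnS => cm; have /andP[b0 b1] := beta01 n c.+1 n1 cm; rewrite !ltW.
Qed.

(* Reflecting the even digits turns [F] into the [p]-analogue of [DeltaQ]. *)
Lemma F_limE x : F m q p x = limn (digit_psum p (Qdigits x) 1).
Proof.
rewrite /F /F_of_digits; congr (limn _); apply/funext => N.
apply: eq_bigr => k _; congr (_ * _).
  by rewrite /betatilde /Qdigits /nega_to_Q; case: odd.
by apply: eq_bigr => l _; rewrite /ptilde /Qdigits /nega_to_Q; case: odd.
Qed.

Lemma cvg_F x : 0 <= x <= 1 -> digit_psum p (Qdigits x) 1 @ \oo --> F m q p x.
Proof.
move=> x01; rewrite F_limE; apply: (cvg_digit_psum betaP_P01 (QdigitsP hQ x01)).
by case: hP => _ _ prod0 _; apply: prod0 (QdigitsP hQ x01).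
Qed.

Lemma integral_psum_term k : (1 <= k)%N ->
  lebesgue_measure.-integrable `[0, 1]
     (fun x => (betaP p (Qdigits x k) k * \prod_(1 <= l < k) p (Qdigits x l) l)%:E) /\
  (\int[lebesgue_measure]_(x in `[0%R, 1%R])
     (betaP p (Qdigits x k) k * \prod_(1 <= l < k) p (Qdigits x l) l)%:E =
    (zQ m q p k * \prod_(1 <= l < k) sigmaQ m q p l)%:E)%E.
Proof.
case: k => // k _.
have shift (u : nat -> R) : \prod_(1 <= l < k.+1) u l = \prod_(i < k) u i.+1.
  by rewrite big_add1 big_mkord.
pose g (i c : nat) := if i == k then betaP p c i.+1 else p c i.+1.
have gE : (fun x => (betaP p (Qdigits x k.+1) k.+1 *
                 \prod_(1 <= l < k.+1) p (Qdigits x l) l)%:E) =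
          (fun x => (\prod_(i < k.+1) g i (Qdigits x i.+1))%:E).
  apply/funext => x; rewrite big_ord_recr /= /g eqxx mulrC shift.
  by congr (_ * _)%:E; apply: eq_bigr => i _; rewrite ltn_eqF.
rewrite gE; have [int_g ->] := integral_prod_digits hQ k.+1 g.
split => //; rewrite big_ord_recr /= mulrC shift /zQ /sigmaQ /g eqxx.
by congr (_ * _)%:E; apply: eq_bigr => i _; rewrite ltn_eqF.
Qed.

Lemma integral_F_psum N :
  lebesgue_measure.-integrable `[0, 1]
    (fun x => (digit_psum p (Qdigits x) 1 N)%:E) /\
  (\int[lebesgue_measure]_(x in `[0%R, 1%R]) (digit_psum p (Qdigits x) 1 N)%:E =
    (\sum_(1 <= n < N) zQ m q p n * \prod_(1 <= k < n) sigmaQ m q p k)%:E)%E.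
Proof.
pose t k x := (if k is 0 then 0 else
  (betaP p (Qdigits x k) k * \prod_(1 <= l < k) p (Qdigits x l) l)%:E)%E.
have tE : (fun x => (digit_psum p (Qdigits x) 1 N)%:E) =
          (fun x => \sum_(1 <= k < N) t k x)%E.
  by apply/funext => x; rewrite -sumEFin; apply: eq_big_nat => -[].
have int_t k : lebesgue_measure.-integrable `[0, 1] (t k).
  by case: k => [|k]; [apply: integrable0 | case: (integral_psum_term (ltn0Sn k))].
rewrite tE; split; first exact: integrable_sum.
rewrite integral_sum // -sumEFin; apply: eq_big_nat => -[//|k] _.
by case: (integral_psum_term (ltn0Sn k)).
Qed.

End FPartialSums.

Theorem mainTheorem7 (R : realType) (m : nat -> nat) (q p : nat -> nat -> R) :
  valid_Q m q -> valid_P m p ->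
  let S := fun N => \sum_(1 <= n < N)
             zQ m q p n * \prod_(1 <= k < n) sigmaQ m q p k in
  [/\ (@lebesgue_measure R).-integrable `[0%R, 1%R] (EFin \o F m q p),
      cvgn S &
      (\int[@lebesgue_measure R]_(x in `[0%R, 1%R]) (F m q p x)%:E = (limn S)%:E)%E].
Proof.
move=> hQ hP S; have int_psum N := integral_F_psum p hQ N.
apply: (@bounded_convergence _ _ _ lebesgue_measure _ _ (lebesgue_measure01_lty R)
  (fun N x => digit_psum p (Qdigits m q x) 1 N) _ S 1) => //.
- by move=> N; case: (int_psum N).
- by move=> x; rewrite /= in_itv /= => x01; apply: cvg_F.
- move=> N x; rewrite /= in_itv /= => x01.
  have /andP[s0 s1] := digit_psum_01 (betaP_P01 hP) N (QdigitsP hQ x01) (leqnn 1).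
  by rewrite ger0_norm.
- by move=> N; case: (int_psum N).
Qed.
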